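(* Let $\mathcal{U}$ be a UEC-representative. Then the set of maximal DAGs in the UEC of $\mathcal{U}$ is exactly one Markov equivalence class of DAGs.
   Context: For a DAG $\mathcal{D}$, a trek is a path with no repeated vertices and no collider; the unconditional dependence graph $\mathcal{U}^\mathcal{D}$ has an edge between distinct $v,w$ iff there is a trek between them. A UEC-representative is an undirected graph $\mathcal{U}$ with $\mathcal{U}=\mathcal{U}^\mathcal{D}$ for some DAG on the same vertex set; its UEC is $\{\mathcal{D}:\mathcal{U}^\mathcal{D}=\mathcal{U}\}$. A DAG in the UEC is maximal if every DAG obtained by adding one edge to it is not in the UEC. Two DAGs are Markov equivalent if they have the same d-separation statements, equivalently the same skeleton and the same v-structures. *)

(* A directed graph on a finite vertex set T is a relation
   e : rel T, with e v w meaning the directed edge v -> w. *)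
From mathcomp Require Import all_boot.
Set Implicit Arguments. Unset Strict Implicit. Unset Printing Implicit Defensive.

Section Graphs.
Variable T : finType.

Definition is_DAG (e : rel T) : Prop :=
  forall v w : T, e v w -> ~~ connect e w v.

Definition adj (e : rel T) : rel T := fun v w => e v w || e w v.

Definition has_collider (e : rel T) (v : T) (p : seq T) : Prop :=
  let s := v :: p in
  exists i : nat, i.+2 < size s /\
    e (nth v s i) (nth v s i.+1) /\ e (nth v s i.+2) (nth v s i.+1).

Definition trek (e : rel T) (v w : T) (p : seq T) : Prop :=
  [/\ p != [::], path (adj e) v p, uniq (v :: p), last v p = w
    & ~ has_collider e v p].

Definition udep (e : rel T) (v w : T) : Prop :=
  v != w /\ exists p : seq T, trek e v w p.

Definition in_UEC (U : rel T) (e : rel T) : Prop :=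
  is_DAG e /\ forall v w : T, U v w <-> udep e v w.

Definition UEC_rep (U : rel T) : Prop := exists e : rel T, in_UEC U e.

Definition add_edge (e : rel T) (a b : T) : rel T :=
  fun x y => e x y || ((x == a) && (y == b)).

Definition maximal_in_UEC (U : rel T) (e : rel T) : Prop :=
  in_UEC U e /\
  forall a b : T, a != b -> ~~ adj e a b ->
    is_DAG (add_edge e a b) -> ~ in_UEC U (add_edge e a b).

Definition vstruct (e : rel T) (a b c : T) : bool :=
  [&& e a b, e c b, a != c & ~~ adj e a c].

Definition markov_equiv (e1 e2 : rel T) : Prop :=
  (forall v w : T, adj e1 v w = adj e2 v w) /\
  (forall a b c : T, vstruct e1 a b c = vstruct e2 a b c).
End Graphs.

(* In a DAG, a trek joins two vertices exactly when they have a common ancestor, so two vertices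
   are adjacent in U^D iff some source of D lies above both. Hence the closed neighbourhood N[x]
   of U is determined by the set of sources above x, and N[x] is contained in N[y] whenever x is an
   ancestor of y. Call a DAG saturated if its edges go up in this preorder and any two distinct
   comparable vertices are adjacent; a saturated DAG lies in the UEC, since its minimal vertices
   in the class of a source play the role of that source.
   A DAG of the UEC is maximal iff it is saturated: two comparable non-adjacent vertices can be
   joined without changing U, while adding a -> b with N[a] not inside N[b] creates a dependence
   between b and a vertex of N[a] outside N[b]. Saturated DAGs have the comparable pairs as
   skeleton and the a -> b <- c with a, c incomparable as v-structures, so they are Markov
   equivalent. Conversely an edge x -> y with N[x] not inside N[y] in a DAG Markov equivalent to
   a saturated one is impossible: a source above x but not above y yields a v-structure
   s -> x <- y. A saturated DAG exists: orient comparable pairs upwards, breaking ties by a fixed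
   enumeration. *)

From mathcomp Require Import all_boot zify.
Set Implicit Arguments. Unset Strict Implicit. Unset Printing Implicit Defensive.

Lemma last_rev_belast (T : Type) (x : T) p : last (last x p) (rev (belast x p)) = x.
Proof.
have -> : last (last x p) (rev (belast x p)) = last x (last x p :: rev (belast x p)) by [].
by rewrite -rev_rcons -lastI rev_cons last_rcons.
Qed.

Section DAGs.
Variable T : finType.
Implicit Types (e D : rel T).

Lemma connect_preorder e (R : rel T) :
  reflexive R -> transitive R -> subrel e R -> subrel (connect e) R.
Proof.
move=> Rr Rt eR x _ /connectP[p + ->]; elim: p x => [|y p IHp] x //= /andP[exy /IHp].
exact: (Rt _ _ _ (eR _ _ exy)).
Qed.

Lemma DAG_irrefl e x : is_DAG e -> ~~ e x x.
Proof. by move=> He; apply/negP => exx; move: (He _ _ exx); rewrite connect0. Qed.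

Lemma DAG_asym e x y : is_DAG e -> e x y -> ~~ e y x.
Proof. by move=> He exy; apply/negP => eyx; move: (He _ _ exy); rewrite connect1. Qed.

Lemma DAG_connect_asym e x y : is_DAG e -> x != y -> connect e x y -> ~~ connect e y x.
Proof.
move=> He xy /connectP[[|z p] /= + Ey]; first by rewrite Ey eqxx in xy.
case/andP => exz Pz; apply: contraNN (He _ _ exz) => Cyx.
by apply: connect_trans Cyx; apply/connectP; exists p.
Qed.

Lemma rank_DAG e (r : T -> nat) : (forall x y, e x y -> r x < r y) -> is_DAG e.
Proof.
move=> er x y exy; apply/negP => Cyx.
have : r y <= r x.
  apply: (connect_preorder (R := [rel a b | r a <= r b])) Cyx => [a|b a c|a b] /=.
  - exact: leqnn.
  - exact: leq_trans.
  - by move/er/ltnW.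
by rewrite leqNgt er.
Qed.

Fixpoint has_colliderb e x p : bool :=
  if p is y :: ((z :: _) as p') then (e x y && e z y) || has_colliderb e y p' else false.

Lemma has_colliderP e x p : has_collider e x p <-> has_colliderb e x p.
Proof.
elim: p x => [|y p IH] x; first by split=> //; case=> i [].
case: p IH => [|z q] IH; first by split=> //; case=> -[|[|i]] [].
have nthE j : j < size [:: y, z & q] -> nth x [:: y, z & q] j = nth y [:: y, z & q] j.
  exact: set_nth_default.
split.
- case=> -[|i] [Hi [H1 H2]]; first by rewrite /= in H1 H2 *; rewrite H1 H2.
  apply/orP; right; apply/IH; exists i.
  change (is_true (e (nth x [:: y, z & q] i) (nth x [:: y, z & q] i.+1))) in H1.
  change (is_true (e (nth x [:: y, z & q] i.+2) (nth x [:: y, z & q] i.+1))) in H2.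
  rewrite /= in Hi; rewrite !nthE /= in H1 H2; try lia.
  by split; first (rewrite /=; lia).
- case/orP => [/andP[H1 H2] | /IH[i [Hi [H1 H2]]]]; first by exists 0.
  exists i.+1; rewrite /= in Hi.
  change (i.+3 < size [:: x, y, z & q] /\
          is_true (e (nth x [:: y, z & q] i) (nth x [:: y, z & q] i.+1)) /\
          is_true (e (nth x [:: y, z & q] i.+2) (nth x [:: y, z & q] i.+1))).
  by rewrite !nthE /=; try lia; split; first lia.
Qed.

(* The second alternative records that the first edge points back into [x]; this is what
   rules out a collider at [x] when the path is extended backwards. *)
Lemma collider_free_common_ancestor e x p :
  path (adj e) x p -> ~~ has_colliderb e x p ->
  connect e x (last x p) \/
  exists y q, [/\ p = y :: q, e y x & exists t, connect e t x && connect e t (last x p)].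
Proof.
elim: p x => [|y p IH] x /=; first by left.
case/andP => adjxy Py Nc.
have Nc' : ~~ has_colliderb e y p.
  by move: Nc; case: p {IH Py} => // z q; rewrite /= negb_or => /andP[].
have [exy | Nexy] := boolP (e x y).
- case: (IH y Py Nc') => [Cy | [z [q [pE ezy _]]]].
    by left; apply: connect_trans (connect1 exy) Cy.
  by move: Nc; rewrite pE /= exy ezy.
- have eyx : e y x by move: adjxy; rewrite /adj (negbTE Nexy).
  right; exists y, p; split => //.
  case: (IH y Py Nc') => [Cy | [z [q [_ _ [t /andP[Cty Ctl]]]]]].
    by exists y; rewrite connect1.
  by exists t; rewrite Ctl (connect_trans Cty (connect1 eyx)).
Qed.

Lemma trek_common_ancestor e v w p :
  trek e v w p -> exists t, connect e t v && connect e t w.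
Proof.
case=> _ Pv _ <- /has_colliderP/negP Nc.
case: (collider_free_common_ancestor Pv Nc) => [Cvw | [_ [_ [_ _ //]]]].
by exists v; rewrite connect0.
Qed.

Lemma no_collider_rev_cat e x q r : is_DAG e ->
  path [rel a b | e b a] x q -> path e (last x q) r -> ~~ has_colliderb e x (q ++ r).
Proof.
move=> He; elim: q x => [|y q IH] x /=.
- move=> _; elim: r x => [|y r IHr] x //= /andP[exy Pr].
  case: r IHr Pr => [|z r] IHr Pr //=.
  rewrite negb_or (IHr y Pr) andbT exy /=.
  by move: Pr => /= /andP[/(DAG_asym He)].
- case/andP => eyx Pq Pr.
  have := IH y Pq Pr; case: (q ++ r) => [|z s] //= /negbTE ->.
  by rewrite orbF (negbTE (DAG_asym He eyx)).
Qed.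

Lemma disjoint_paths_trek e t p1 p2 : is_DAG e ->
  path e t p1 -> path e t p2 -> uniq (t :: p1) -> uniq (t :: p2) ->
  ~~ has (mem p2) p1 -> last t p1 != last t p2 ->
  trek e (last t p1) (last t p2) (rev (belast t p1) ++ p2).
Proof.
move=> He P1 P2 U1 U2 p12 Nlast; set v := last t p1.
have lastE : last v (rev (belast t p1)) = t by apply: last_rev_belast.
split.
- apply: contra_neq Nlast => p0.
  by rewrite -[in RHS]lastE -last_cat p0.
- rewrite cat_path lastE rev_path; apply/andP; split.
    by apply: sub_path P1 => a b eab; rewrite /adj eab orbT.
  by apply: sub_path P2 => a b eab; rewrite /adj eab.
- rewrite -cat_cons /v -rev_rcons -lastI cat_uniq rev_uniq U1.
  by rewrite has_sym has_rev -cat1s has_cat has_seq1 negb_or p12 andbT -cons_uniq.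
- by rewrite last_cat lastE.
- apply/has_colliderP/negP; apply: no_collider_rev_cat => //.
    by rewrite rev_path.
  by rewrite lastE.
Qed.

Lemma common_ancestor_trek e t p1 p2 : is_DAG e ->
  path e t p1 -> path e t p2 -> uniq (t :: p1) -> uniq (t :: p2) ->
  last t p1 != last t p2 -> exists p, trek e (last t p1) (last t p2) p.
Proof.
move=> He; have [n] := ubnP (size p1 + size p2).
elim: n t p1 p2 => [|n IHn] t p1 p2; rewrite ?ltn0 // ltnS => Hn P1 P2 U1 U2 Nlast.
have [/hasP[u u1 u2] | p12] := boolP (has (mem p2) p1); last first.
  by exists (rev (belast t p1) ++ p2); apply: disjoint_paths_trek.
move: P1 U1 Nlast Hn; case/splitPr: u1 => q1 r1.
move: P2 U2; case/splitPr: u2 => q2 r2.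
rewrite !cat_path !last_cat !size_cat /= => /and3P[_ _ P2] U2 /and3P[_ _ P1] U1 Nlast Hn.
apply: IHn P1 P2 _ _ Nlast; first lia.
- by case/andP: U1 => _; rewrite cat_uniq => /and3P[].
- by case/andP: U2 => _; rewrite cat_uniq => /and3P[].
Qed.

Lemma udepP e v w : is_DAG e ->
  udep e v w <-> v != w /\ exists t, connect e t v && connect e t w.
Proof.
move=> He; split=> [[vw [p /trek_common_ancestor]] // | [vw [t /andP[Ctv Ctw]]]].
split=> //; case/connectP: Ctv vw => p1 + ->; case/shortenP => q1 P1 U1 _.
case/connectP: Ctw => p2 + ->; case/shortenP => q2 P2 U2 _ Nlast.
exact: common_ancestor_trek.
Qed.

Definition source e s := [forall y, ~~ e y s].

Lemma DAG_minimal D (P : pred T) u : is_DAG D -> P u ->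
  exists t, [/\ P t, connect D t u & forall v, P v -> ~~ D v t].
Proof.
move=> HD Pu; have Pu' : P u && connect D u u by rewrite Pu connect0.
case: (arg_minnP (P := [pred x | P x && connect D x u])
    (fun x => #|[set y | connect D y x]|) Pu') => t /andP[Pt Ctu] tmin.
exists t; split=> // v Pv; apply/negP => Dvt.
have := tmin v; rewrite /= Pv (connect_trans (connect1 Dvt) Ctu) => /(_ isT).
apply/negP; rewrite -ltnNge; apply: proper_card; apply/properP; split.
- by apply/subsetP => x; rewrite !inE => Cxv; apply: connect_trans Cxv (connect1 Dvt).
- by exists t; rewrite !inE ?connect0 //; apply: HD.
Qed.

Lemma source_ancestor e v : is_DAG e -> exists s, source e s /\ connect e s v.
Proof.
move=> He; have [s [_ Csv smin]] := DAG_minimal (P := predT) He (isT : predT v).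
by exists s; split=> //; apply/forallP => y; apply: smin.
Qed.

Lemma source_connect_eq e s t : source e s -> connect e t s -> t = s.
Proof.
move=> /forallP Ss /connectP[p]; case/lastP: p => [_ -> // | p u].
rewrite rcons_path last_rcons => /andP[_ eu] su.
by move: (Ss (last t p)); rewrite su eu.
Qed.

End DAGs.

Section Neighbourhoods.
Variable T : finType.
Implicit Types (U e : rel T).

Definition cnbhd U x : {set T} := [set z | (z == x) || U z x].

Definition nbhd_le U x y := cnbhd U x \subset cnbhd U y.

Lemma nbhd_le_refl U : reflexive (nbhd_le U).
Proof. by move=> x; apply: subxx. Qed.

Lemma nbhd_le_trans U : transitive (nbhd_le U).
Proof. by move=> y x z; apply: subset_trans. Qed.

Lemma connect_nbhd_le U e : subrel e (nbhd_le U) -> subrel (connect e) (nbhd_le U).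
Proof. by apply: connect_preorder; [apply: nbhd_le_refl | apply: nbhd_le_trans]. Qed.

Section InUEC.
Variables U e : rel T.
Hypothesis He : in_UEC U e.

Lemma UEC_adjP v w : U v w <-> v != w /\ exists t, connect e t v && connect e t w.
Proof. by rewrite -udepP; [apply: He.2 | apply: He.1]. Qed.

Lemma cnbhd_sourceP z x :
  z \in cnbhd U x <-> exists s, [/\ source e s, connect e s z & connect e s x].
Proof.
rewrite inE; split.
- case/orP => [/eqP -> | /UEC_adjP[_ [t /andP[Ctz Ctx]]]].
    by have [s [Ss Csx]] := source_ancestor x He.1; exists s.
  have [s [Ss Cst]] := source_ancestor t He.1.
  by exists s; rewrite !(connect_trans Cst).
- case=> s [Ss Csz Csx]; have [// | zx] := eqVneq z x.
  by apply/orP; right; apply/UEC_adjP; split=> //; exists s; rewrite Csz Csx.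
Qed.

Lemma nbhd_leP x y :
  reflect (forall s, source e s -> connect e s x -> connect e s y) (nbhd_le U x y).
Proof.
apply: (iffP subsetP) => [sub s Ss Csx | anc z].
- have /sub/cnbhd_sourceP[s' [Ss' Cs's Cs'y]] : s \in cnbhd U x.
    by apply/cnbhd_sourceP; exists s; rewrite connect0.
  by rewrite -(source_connect_eq Ss Cs's).
- case/cnbhd_sourceP => s [Ss Csz Csx].
  by apply/cnbhd_sourceP; exists s; split=> //; apply: anc.
Qed.

Lemma ancestor_nbhd_le : subrel (connect e) (nbhd_le U).
Proof. by move=> x y Cxy; apply/nbhd_leP => s _ Csx; apply: connect_trans Csx Cxy. Qed.

Lemma nbhd_le_adj t v w : v != w -> nbhd_le U t v -> nbhd_le U t w -> U v w.
Proof.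
move=> vw /nbhd_leP tv /nbhd_leP tw; have [s [Ss Cst]] := source_ancestor t He.1.
by apply/UEC_adjP; split=> //; exists s; rewrite tv ?tw.
Qed.

Lemma source_nbhd_le s v : source e s -> nbhd_le U s v -> connect e s v.
Proof. by move=> Ss /nbhd_leP; apply. Qed.

Lemma nbhd_le_source s y : source e s -> nbhd_le U y s -> connect e s y.
Proof.
move=> Ss /nbhd_leP ys; have [s' [Ss' Cs'y]] := source_ancestor y He.1.
by rewrite -(source_connect_eq Ss (ys s' Ss' Cs'y)).
Qed.

End InUEC.
End Neighbourhoods.

Section Saturated.
Variable T : finType.
Implicit Types (U e D : rel T).

Definition nbhd_saturated U D :=
  subrel D (nbhd_le U) /\ forall x y, x != y -> nbhd_le U x y -> adj D x y.

Lemma nbhd_monotone_udep U e D : in_UEC U e -> is_DAG D ->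
  subrel D (nbhd_le U) -> forall v w, udep D v w -> U v w.
Proof.
move=> He HD mono v w /(udepP _ _ HD)[vw [t /andP[Ctv Ctw]]].
exact: (nbhd_le_adj He vw (connect_nbhd_le mono Ctv) (connect_nbhd_le mono Ctw)).
Qed.

Lemma connect_add_edge D a b x y : connect D x y -> connect (add_edge D a b) x y.
Proof. by apply: connect_sub => u v Duv; apply: connect1; rewrite /add_edge Duv. Qed.

Lemma add_edge_DAG D a b : is_DAG D -> ~~ connect D b a -> is_DAG (add_edge D a b).
Proof.
move=> HD Nba v w evw; apply/negP => Cwv.
have : connect D w v || connect D w a && connect D b v.
  (* The relation reached in [D] or through one use of the new edge is already transitive. *)
  apply: (connect_preorder (R := [rel x y | connect D x y || connect D x a && connect D b y]))
    Cwv => [x|y x z|x y] /=; first by rewrite connect0.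
  - case/orP=> [Cxy | /andP[Cxa Cby]] /orP[Cyz | /andP[Cya Cbz]].
    + by rewrite (connect_trans Cxy Cyz).
    + by rewrite (connect_trans Cxy Cya) Cbz orbT.
    + by rewrite Cxa (connect_trans Cby Cyz) orbT.
    + by rewrite Cxa Cbz orbT.
  - by case/orP=> [/connect1 -> // | /andP[/eqP -> /eqP ->]]; rewrite !connect0 orbT.
case/orP: evw => [Dvw | /andP[/eqP -> /eqP ->]] /orP[Cwv' | /andP[Cwa Cbv]].
- by move: (HD _ _ Dvw); rewrite Cwv'.
- by move: Nba; rewrite (connect_trans (connect_trans Cbv (connect1 Dvw)) Cwa).
- by rewrite Cwv' in Nba.
- by rewrite Cwa in Nba.
Qed.

Lemma add_edge_in_UEC U D a b : in_UEC U D -> nbhd_le U a b -> ~~ connect D b a ->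
  in_UEC U (add_edge D a b).
Proof.
move=> HD ab Nba; have HDab := add_edge_DAG HD.1 Nba.
split=> // v w; split=> [/(UEC_adjP HD)[vw [t /andP[Ctv Ctw]]] | ].
  by apply/udepP => //; split=> //; exists t; rewrite !connect_add_edge.
apply: (nbhd_monotone_udep HD HDab) => x y /orP[/connect1/(ancestor_nbhd_le HD) // |].
by case/andP=> /eqP -> /eqP ->.
Qed.

Lemma maximal_nbhd_saturated U D : maximal_in_UEC U D -> nbhd_saturated U D.
Proof.
move=> [HD maxD]; split=> [x y /connect1 | x y xy lexy]; first exact: (ancestor_nbhd_le HD).
apply/negPn/negP => Nadj.
have [Cyx | Ncyx] := boolP (connect D y x).
- have Ncxy : ~~ connect D x y by apply: DAG_connect_asym HD.1 _ Cyx; rewrite eq_sym.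
  have HDyx := add_edge_in_UEC HD (ancestor_nbhd_le HD Cyx) Ncxy.
  apply: (maxD y x _ _ HDyx.1 HDyx); first by rewrite eq_sym.
  by rewrite /adj orbC.
- have HDxy := add_edge_in_UEC HD lexy Ncyx.
  exact: (maxD x y xy Nadj HDxy.1 HDxy).
Qed.

Lemma nbhd_saturated_in_UEC U e D : in_UEC U e -> is_DAG D -> nbhd_saturated U D ->
  in_UEC U D.
Proof.
move=> He HD [mono sat]; split=> // v w; split; last exact: nbhd_monotone_udep He HD mono v w.
case/(UEC_adjP He) => vw [t0 /andP[Ct0v Ct0w]].
have [s [_ Cst0]] := source_ancestor t0 He.1.
pose cls := [pred u | nbhd_le U u s && nbhd_le U s u].
have cls_s : cls s by rewrite /= nbhd_le_refl.
have [t [/andP[ts st] _ tmin]] := DAG_minimal (P := cls) HD cls_s.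
have Ct x : nbhd_le U s x -> connect D t x.
  move=> sx; have tx := nbhd_le_trans ts sx.
  have [<- | tx'] := eqVneq t x; first exact: connect0.
  case/orP: (sat _ _ tx' tx) => [/connect1 // | Dxt].
  by move: (tmin x); rewrite /= (nbhd_le_trans (mono _ _ Dxt) ts) sx Dxt => /(_ isT).
have Cs y : connect e t0 y -> connect D t y.
  by move=> Ct0y; apply/Ct/(ancestor_nbhd_le He)/(connect_trans Cst0).
by apply/udepP => //; split=> //; exists t; rewrite !Cs.
Qed.

Lemma nbhd_saturated_maximal U D : in_UEC U D -> nbhd_saturated U D -> maximal_in_UEC U D.
Proof.
move=> HD [mono sat]; split=> // a b ab Nadj _ HDab.
have /subsetPn[z za Nzb] : ~~ nbhd_le U a b by apply: contra Nadj; apply: sat.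
have zb : z != b by apply: contraNneq Nzb => ->; rewrite inE eqxx.
move/negP: Nzb; apply; rewrite inE; apply/orP; right.
apply/(HDab.2 z b)/(udepP _ _ HDab.1); split=> //.
have Cab : connect (add_edge D a b) a b by apply: connect1; rewrite /add_edge !eqxx orbT.
move: za; rewrite inE => /orP[/eqP -> | /(UEC_adjP HD)[_ [t /andP[Ctz Cta]]]].
  by exists a; rewrite connect0.
by exists t; rewrite connect_add_edge // (connect_trans (connect_add_edge a b Cta) Cab).
Qed.

Lemma nbhd_saturated_adj U D x y : is_DAG D -> nbhd_saturated U D ->
  adj D x y = (x != y) && (nbhd_le U x y || nbhd_le U y x).
Proof.
move=> HD [mono sat]; apply/idP/andP => [adjxy | [xy /orP[lexy | leyx]]].
- have xy : x != y.
    by apply: contraTneq adjxy => ->; rewrite /adj orbb (DAG_irrefl _ HD).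
  by split=> //; case/orP: adjxy => /mono ->; rewrite ?orbT.
- exact: sat.
- by rewrite /adj orbC; apply: sat; rewrite // eq_sym.
Qed.

Lemma nbhd_saturated_lt_edge U D x y : nbhd_saturated U D ->
  nbhd_le U x y -> ~~ nbhd_le U y x -> D x y.
Proof.
move=> [mono sat] lexy Nyx.
have xy : x != y by apply: contraNneq Nyx => ->; apply: nbhd_le_refl.
by case/orP: (sat _ _ xy lexy) => // /mono leyx; rewrite leyx in Nyx.
Qed.

Lemma nbhd_saturated_vstruct U D1 D2 a b c : is_DAG D1 -> is_DAG D2 ->
  nbhd_saturated U D1 -> nbhd_saturated U D2 -> vstruct D1 a b c -> vstruct D2 a b c.
Proof.
move=> HD1 HD2 sat1 sat2.
rewrite /vstruct (nbhd_saturated_adj _ _ HD1 sat1) (nbhd_saturated_adj _ _ HD2 sat2).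
case/and4P => /(sat1.1 _ _) ab /(sat1.1 _ _) cb ac Nac.
have Nba : ~~ nbhd_le U b a.
  by apply: contra Nac => ba; rewrite ac (nbhd_le_trans cb ba) orbT.
have Nbc : ~~ nbhd_le U b c by apply: contra Nac => bc; rewrite ac (nbhd_le_trans ab bc).
by rewrite !(nbhd_saturated_lt_edge sat2) //= Nac ac.
Qed.

Lemma nbhd_saturated_markov_equiv U D1 D2 : is_DAG D1 -> is_DAG D2 ->
  nbhd_saturated U D1 -> nbhd_saturated U D2 -> markov_equiv D1 D2.
Proof.
move=> HD1 HD2 sat1 sat2; split=> [v w | a b c].
  by rewrite (nbhd_saturated_adj _ _ HD1 sat1) (nbhd_saturated_adj _ _ HD2 sat2).
by apply/idP/idP; [apply: (nbhd_saturated_vstruct HD1 HD2 sat1 sat2) |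
  apply: (nbhd_saturated_vstruct HD2 HD1 sat2 sat1)].
Qed.

Lemma nbhd_saturated_vstruct_witness U e D x y : in_UEC U e -> is_DAG D ->
  nbhd_saturated U D -> nbhd_le U y x -> ~~ nbhd_le U x y -> exists s, vstruct D s x y.
Proof.
move=> He HD sat yx Nxy.
have /existsP[s /and3P[Ss Csx Ncsy]] :
    [exists s, [&& source e s, connect e s x & ~~ connect e s y]].
  apply: contraR Nxy => /existsPn NE; apply/(nbhd_leP He) => s Ss Csx.
  by move: (NE s); rewrite Ss Csx negbK.
have sx := ancestor_nbhd_le He Csx.
have Nsy : ~~ nbhd_le U s y by apply: contra Ncsy; exact: (source_nbhd_le He Ss).
have Nys : ~~ nbhd_le U y s by apply: contra Ncsy; exact: (nbhd_le_source He Ss).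
have Nxs : ~~ nbhd_le U x s by apply: contra Nys; exact: (nbhd_le_trans yx).
exists s; rewrite /vstruct (nbhd_saturated_adj _ _ HD sat) !(nbhd_saturated_lt_edge sat) //.
rewrite (negbTE Nsy) (negbTE Nys) /= andbF andbT.
by apply: contraNneq Ncsy => ->; apply: connect0.
Qed.

Lemma markov_equiv_nbhd_saturated U e D0 D : in_UEC U e -> is_DAG D0 ->
  nbhd_saturated U D0 -> is_DAG D -> markov_equiv D D0 -> nbhd_saturated U D.
Proof.
move=> He HD0 sat0 HD [adjE vsE]; split=> [x y Dxy | x y xy lexy]; last first.
  by rewrite adjE; apply: sat0.2.
apply/negPn/negP => Nxy.
have : adj D0 x y by rewrite -adjE /adj Dxy.
rewrite (nbhd_saturated_adj _ _ HD0 sat0) (negbTE Nxy) /= => /andP[_ yx].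
have [s] := nbhd_saturated_vstruct_witness He HD0 sat0 yx Nxy.
by rewrite -vsE => /and4P[_ Dyx _ _]; move: (DAG_asym HD Dxy); rewrite Dyx.
Qed.

(* Vertices with the same closed neighbourhood are ordered by their rank in [enum T]. *)
Definition nbhd_DAG U : rel T := fun x y =>
  [&& x != y, nbhd_le U x y & ~~ nbhd_le U y x || (enum_rank x < enum_rank y)].

Lemma nbhd_DAG_is_DAG U : is_DAG (nbhd_DAG U).
Proof.
pose down x := [set z | nbhd_le U z x].
apply: (@rank_DAG _ _ (fun x => #|down x| * #|T| + enum_rank x)) => x y /and3P[xy lexy].
have sub : down x \subset down y.
  by apply/subsetP => z; rewrite !inE => zx; apply: nbhd_le_trans zx lexy.
case: (boolP (nbhd_le U y x)) => [leyx | Nyx] /= rk.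
- have -> : #|down x| = #|down y|.
    apply/eqP; rewrite eqn_leq subset_leq_card //=; apply/subset_leq_card/subsetP => z.
    by rewrite !inE => zy; apply: nbhd_le_trans zy leyx.
  by rewrite ltn_add2l.
- have lt_down : #|down x| < #|down y|.
    by apply/proper_card/properP; split=> //; exists y; rewrite !inE ?nbhd_le_refl.
  apply: (@leq_trans (#|down x|.+1 * #|T|)).
    by rewrite mulSn addnC ltn_add2r; apply: ltn_ord.
  by apply: leq_trans (leq_addr _ _); rewrite leq_mul2r lt_down orbT.
Qed.

Lemma nbhd_DAG_saturated U : nbhd_saturated U (nbhd_DAG U).
Proof.
split=> [x y /and3P[] // | x y xy lexy].
rewrite /adj /nbhd_DAG xy lexy eq_sym xy /=.
case: (boolP (nbhd_le U y x)) => //= _.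
by rewrite -neq_ltn; apply: contra_neq xy => /val_inj/enum_rank_inj.
Qed.

End Saturated.

Theorem corollary5p2 (T : finType) (U : rel T) :
  UEC_rep U ->
  exists D0 : rel T, is_DAG D0 /\
    forall D : rel T, is_DAG D -> (maximal_in_UEC U D <-> markov_equiv D D0).
Proof.
case=> e He; have HD0 := @nbhd_DAG_is_DAG T U; have sat0 := @nbhd_DAG_saturated T U.
exists (nbhd_DAG U); split=> // D HD; split=> [maxD | DD0].
- exact: nbhd_saturated_markov_equiv HD HD0 (maximal_nbhd_saturated maxD) sat0.
- have satD := markov_equiv_nbhd_saturated He HD0 sat0 HD DD0.
  exact: nbhd_saturated_maximal (nbhd_saturated_in_UEC He HD satD) satD.
Qed.
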